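(* Let $V$ be a complex vector space of dimension $N$, $\underline v=(v_1,\dots,v_N)$ a basis of $V$, $\underline a\in\mathbb R^N$, $\|\cdot\|$ a Hermitian norm on $V$ admitting $\underline v$ as an orthogonal basis, and $\|\cdot\|'$ an arbitrary norm on $V$. Then for every $p\in[1,\infty]$, $$d_p\big(\iota_{\underline v}(\|\cdot\|,\underline a),\iota^1_{\underline v}(\|\cdot\|',\underline a)\big)\le d_\infty(\|\cdot\|,\|\cdot\|')+\log N.$$
   Context: For two norms $\|\cdot\|,\|\cdot\|'$ on $V$ ($\dim V=N$), the successive minima are $\lambda_i(\|\cdot\|,\|\cdot\|')=\sup_{W\in\mathrm{Grass}_i(V)}\inf_{w\in W\setminus\{0\}}\log(\|w\|'/\|w\|)$, $i=1,\dots,N$; for $p\in[1,\infty)$, $d_p(\|\cdot\|,\|\cdot\|')^p=N^{-1}\sum_i|\lambda_i|^p$ and $d_\infty=\max_i|\lambda_i|$. Given a Hermitian norm $\|\cdot\|$ with orthogonal basis $\underline v$ and $\underline a\in\mathbb R^N$, $\iota_{\underline v}(\|\cdot\|,\underline a)$ is the Hermitian norm with orthogonal basis $\underline v$ and $\iota_{\underline v}(\|\cdot\|,\underline a)(v_i)=\|v_i\|e^{-a_i}$. For any norm $\|\cdot\|'$, let $\|\cdot\|^{NA}_{\underline v,\underline a}$ be the non-Archimedean norm $\|\sum\alpha_iv_i\|^{NA}_{\underline v,\underline a}=\max_{i:\alpha_i\ne0}e^{-a_i}$, and define $\iota^1_{\underline v}(\|\cdot\|',\underline a)(w)=\inf\{\sum_j\|w_j\|'\,\|w_j\|^{NA}_{\underline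 v,\underline a}: w=\sum_j w_j\}$, the infimum over all finite decompositions of $w$ as a sum of vectors of $V$. *)

From HB Require Import structures.
From mathcomp Require Import all_boot all_order all_algebra.
From mathcomp Require Import complex.
From mathcomp Require Import all_classical all_reals.
From mathcomp Require Import sequences exp.
Set Implicit Arguments. Unset Strict Implicit. Unset Printing Implicit Defensive.
Import Order.TTheory GRing.Theory Num.Theory.
Local Open Scope ring_scope.
Local Open Scope classical_set_scope.

Section Defs.
Variables (R : realType) (N : nat).
Local Notation C := (R[i]).
Local Notation V := ('rV[C]_N).

Definition cmod (c : C) : R := Num.sqrt (complex.Re c ^+ 2 + complex.Im c ^+ 2).

Definition is_norm (n : V -> R) : Prop :=
  [/\ forall x, x != 0 -> 0 < n x,
      forall (c : C) x, n (c *: x) = cmod c * n x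
    & forall x y, n (x + y) <= n x + n y].

Definition hermitian_form (h : V -> V -> C) : Prop :=
  [/\ forall (c : C) x y z, h (c *: x + y) z = c * h x z + h y z,
      forall x y, h y x = ((h x y)^*)%C
    & forall x, x != 0 -> 0 < complex.Re (h x x)].

Definition hermitian_orth (v : 'I_N -> V) (n : V -> R) : Prop :=
  exists h, [/\ hermitian_form h,
    forall x, n x = Num.sqrt (complex.Re (h x x))
  & forall i j, i != j -> h (v i) (v j) = 0].

Definition basis_mx (v : 'I_N -> V) : 'M[C]_N := \matrix_(i, j) v i 0 j.
Definition is_basis (v : 'I_N -> V) : Prop := basis_mx v \in unitmx.

(* coordinates of w in the basis v : w = sum_i (coord v w i) v_i *)
Definition coord (v : 'I_N -> V) (w : V) (i : 'I_N) : C :=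
  (w *m invmx (basis_mx v)) 0 i.

(* iota_v(||.||, a): the Hermitian norm with orthogonal basis v and
   iota(v_i) = ||v_i|| e^{-a_i}; characterised by this property. *)
Definition is_iota (v : 'I_N -> V) (n : V -> R) (a : 'I_N -> R)
  (n1 : V -> R) : Prop :=
  hermitian_orth v n1 /\ forall i, n1 (v i) = n (v i) * expR (- a i).

(* non-Archimedean norm ||sum alpha_i v_i||^NA = max_{alpha_i != 0} e^{-a_i}
   (max over the empty set is 0) *)
Definition na_norm (v : 'I_N -> V) (a : 'I_N -> R) (w : V) : R :=
  \big[Num.max/0]_(i | coord v w i != 0) expR (- a i).

Definition iota1 (v : 'I_N -> V) (n : V -> R) (a : 'I_N -> R) (w : V) : R :=
  inf [set s | exists ws : seq V, \sum_(u <- ws) u = w /\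
               s = \sum_(u <- ws) n u * na_norm v a u].

(* successive minima lambda_{i+1}(n1, n2), i : 'I_N *)
Definition succ_min (n1 n2 : V -> R) (i : 'I_N) : R :=
  sup [set x | exists W : 'M[C]_N, \rank W = i.+1 /\
     x = inf [set y | exists w : V, [/\ (w <= W)%MS, w != 0 &
                 y = ln (n2 w / n1 w)]]].

Definition dist_p (p : \bar R) (n1 n2 : V -> R) : R :=
  match p with
  | EFin r => powR (N%:R^-1 * \sum_(i < N) powR `|succ_min n1 n2 i| r) r^-1
  | _ => \big[Num.max/0]_(i < N) `|succ_min n1 n2 i|
  end.

End Defs.

From Pilot Require Import Defs.
From HB Require Import structures.
From mathcomp Require Import all_boot all_order all_algebra.
From mathcomp Require Import complex.
From mathcomp Require Import all_classical all_reals.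
From mathcomp Require Import sequences exp.
From mathcomp Require Import all_analysis.
From mathcomp Require Import ring lra.
Import Order.TTheory GRing.Theory Num.Theory numFieldTopology.Exports numFieldNormedType.Exports.
Set Implicit Arguments. Unset Strict Implicit. Unset Printing Implicit Defensive.
Local Open Scope ring_scope.
Local Open Scope complex_scope.
Local Notation coord := Defs.coord.

(* Put D = d_oo(||.||, ||.||').  The first and the last successive minima are
   the extreme values of log(||w||'/||w||), hence e^-D ||w|| <= ||w||' <= e^D ||w||.
   Write w = sum_k alpha_k v_k and iota = iota_v(||.||, a).  Orthogonality gives
   |alpha_k| iota(v_k) <= iota(w) <= sum_k |alpha_k| iota(v_k), where
   iota(v_k) = ||v_k|| e^-a_k.  The decomposition of w along the basis shows
   iota^1(w) <= N e^D iota(w); conversely, for any decomposition w = sum_j w_j,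
   each term |alpha_k| iota(v_k) is at most sum_j ||w_j|| ||w_j||^NA
   <= e^D sum_j ||w_j||' ||w_j||^NA, so iota(w) <= N e^D iota^1(w).  Thus every
   lambda_i(iota, iota^1) lies in [-(D + log N), D + log N], which bounds every d_p.
   Sup and inf only behave on bounded sets, so the ratio of any two of the norms
   involved must first be bounded; this is equivalence of norms in finite
   dimension, obtained from compactness of the unit sphere of R^(2N). *)

Section ComplexModulus.
Variable R : realType.
Implicit Types (a b z : R[i]).

Lemma cmodE z : `|z| = (cmod z)%:C.
Proof. by rewrite normc_def. Qed.

Lemma cmod_ge0 z : 0 <= cmod z.
Proof. exact: sqrtr_ge0. Qed.

Lemma cmodM a b : cmod (a * b) = cmod a * cmod b.
Proof. by apply: (@complexI R); rewrite -cmodE normrM !cmodE rmorphM. Qed.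

Lemma cmodD a b : cmod (a + b) <= cmod a + cmod b.
Proof. by rewrite -lecR; have := ler_normD a b; rewrite !cmodE rmorphD. Qed.

Lemma cmod_eq0 z : (cmod z == 0) = (z == 0).
Proof. by rewrite -[z == 0]normr_eq0 cmodE (inj_eq (@complexI R)). Qed.

Lemma cmod0 : cmod (0 : R[i]) = 0.
Proof. by apply/eqP; rewrite cmod_eq0. Qed.

Lemma cmodN1 : cmod (-1 : R[i]) = 1.
Proof. by apply: (@complexI R); rewrite -cmodE normrN1. Qed.

Lemma cmod_real (r : R) : cmod r%:C = `|r|.
Proof. by rewrite /cmod /= expr0n /= addr0 sqrtr_sqr. Qed.

Lemma cmod_sum (I : Type) (r : seq I) (F : I -> R[i]) :
  cmod (\sum_(k <- r) F k) <= \sum_(k <- r) cmod (F k).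
Proof.
elim: r => [|x r IH]; first by rewrite !big_nil cmod0.
by rewrite !big_cons; apply: le_trans (cmodD _ _) _; rewrite lerD2l.
Qed.

Lemma cmod_le_ReIm (x y : R) : cmod (x +i* y) <= `|x| + `|y|.
Proof.
rewrite -ler_sqr ?nnegrE ?cmod_ge0 ?addr_ge0 // sqr_sqrtr ?addr_ge0 ?sqr_ge0 //=.
rewrite -[x ^+ 2]real_normK ?num_real // -[y ^+ 2]real_normK ?num_real //.
by rewrite sqrrD -addrA lerD2l lerDr mulrn_wge0 ?mulr_ge0.
Qed.

Lemma Re_mul_conj_real z (t : R[i]) : complex.Im t = 0 ->
  complex.Re (z * (z * t)^*) = cmod z ^+ 2 * complex.Re t.
Proof.
rewrite sqr_sqrtr ?addr_ge0 ?sqr_ge0 //.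
by case: z => a b; case: t => t1 t2 /= ->; ring.
Qed.

End ComplexModulus.

Section Coordinates.
Variables (R : realType) (N : nat) (v : 'I_N -> 'rV[R[i]]_N).
Hypothesis Hv : is_basis v.

Lemma mulmx_basis_mx (c : 'rV[R[i]]_N) : c *m basis_mx v = \sum_k c 0 k *: v k.
Proof.
rewrite mulmx_sum_row; apply: eq_bigr => k _; congr (_ *: _).
by apply/rowP => j; rewrite !mxE.
Qed.

Lemma coord_decomp w : \sum_k coord v w k *: v k = w.
Proof. by rewrite -mulmx_basis_mx mulmxKV. Qed.

Lemma coord_comb (c : 'I_N -> R[i]) j : coord v (\sum_k c k *: v k) j = c j.
Proof.
have -> : \sum_k c k *: v k = (\row_k c k) *m basis_mx v.
  by rewrite mulmx_basis_mx; apply: eq_bigr => k _; rewrite mxE.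
by rewrite /coord mulmxK // mxE.
Qed.

Lemma coordD x y j : coord v (x + y) j = coord v x j + coord v y j.
Proof. by rewrite /coord mulmxDl mxE. Qed.

Lemma coordZ (c : R[i]) x j : coord v (c *: x) j = c * coord v x j.
Proof. by rewrite /coord -scalemxAl mxE. Qed.

Lemma coord0 j : coord v 0 j = 0.
Proof. by rewrite /coord mul0mx mxE. Qed.

Lemma coord_sum (ws : seq 'rV[R[i]]_N) j :
  coord v (\sum_(u <- ws) u) j = \sum_(u <- ws) coord v u j.
Proof. exact: (big_morph _ (fun x y => coordD x y j) (coord0 j)). Qed.

Lemma coord_scale_basis (c : R[i]) k j :
  coord v (c *: v k) j = if j == k then c else 0.
Proof.
rewrite -(coord_comb (fun l => if l == k then c else 0) j).
by rewrite (bigD1 k) //= eqxx big1 ?addr0 // => l /negbTE ->; rewrite scale0r.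
Qed.

Lemma basis_neq0 k : v k != 0.
Proof.
apply: contra_neq (@oner_neq0 R[i]) => vk0.
by have := coord_scale_basis 1 k k; rewrite eqxx vk0 scaler0 coord0.
Qed.

End Coordinates.

Section HermitianForm.
Variables (R : realType) (N : nat) (v : 'I_N -> 'rV[R[i]]_N).
Hypothesis Hv : is_basis v.
Variable h : 'rV[R[i]]_N -> 'rV[R[i]]_N -> R[i].
Hypothesis Hh : hermitian_form h.
Hypothesis h_orth : forall i j, i != j -> h (v i) (v j) = 0.

Lemma hermDl x y z : h (x + y) z = h x z + h y z.
Proof. by case: Hh => hlin _ _; rewrite -[x]scale1r hlin mul1r scale1r. Qed.

Lemma herm0l z : h 0 z = 0.
Proof. by apply: (@addrI _ (h 0 z)); rewrite -hermDl !addr0. Qed.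

Lemma hermZl c x z : h (c *: x) z = c * h x z.
Proof. by case: Hh => hlin _ _; rewrite -[c *: x]addr0 hlin herm0l addr0. Qed.

Lemma herm_suml (F : 'I_N -> 'rV[R[i]]_N) z : h (\sum_k F k) z = \sum_k h (F k) z.
Proof. exact: (big_morph (fun x => h x z) (fun x y => hermDl x y z) (herm0l z)). Qed.

Lemma Im_herm_diag x : complex.Im (h x x) = 0.
Proof. by case: Hh => _ hsym _; move: (hsym x x); case: (h x x) => a b [] /=; lra. Qed.

Lemma Re_herm_diag_ge0 x : 0 <= complex.Re (h x x).
Proof.
have [->|x0] := eqVneq x 0; first by rewrite herm0l.
by case: Hh => _ _ hpos; exact/ltW/hpos.
Qed.

Lemma herm_basis_r w k : h w (v k) = coord v w k * h (v k) (v k).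
Proof.
rewrite -{1}(coord_decomp Hv w) herm_suml (bigD1 k) //= big1 ?addr0 ?hermZl //.
by move=> l lk; rewrite hermZl h_orth ?mulr0.
Qed.

Lemma Re_herm_diag_orth w : complex.Re (h w w) =
  \sum_k cmod (coord v w k) ^+ 2 * complex.Re (h (v k) (v k)).
Proof.
case: Hh => _ hsym _; rewrite -{1}(coord_decomp Hv w) herm_suml.
rewrite (raddf_sum (@complex.Re R : Rcomplex R -> R)).
apply: eq_bigr => k _.
by rewrite hermZl hsym herm_basis_r; apply: Re_mul_conj_real; rewrite Im_herm_diag.
Qed.

End HermitianForm.

Section HermitianNorm.
Variables (R : realType) (N : nat) (v : 'I_N -> 'rV[R[i]]_N).
Hypothesis Hv : is_basis v.
Variable n : 'rV[R[i]]_N -> R.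
Hypothesis Hn : hermitian_orth v n.

Lemma hnorm_ge0 w : 0 <= n w.
Proof. by case: Hn => h [_ -> _]; exact: sqrtr_ge0. Qed.

Lemma hnorm_gt0 w : w != 0 -> 0 < n w.
Proof. by case: Hn => h [[_ _ hpos] -> _] w0; rewrite sqrtr_gt0 hpos. Qed.

Lemma hnorm_sqr_orth w :
  n w ^+ 2 = \sum_k cmod (coord v w k) ^+ 2 * n (v k) ^+ 2.
Proof.
case: Hn => h [Hh nE h_orth].
rewrite nE (sqr_sqrtr (Re_herm_diag_ge0 Hh _)) (Re_herm_diag_orth Hv Hh h_orth).
by apply: eq_bigr => k _; rewrite nE (sqr_sqrtr (Re_herm_diag_ge0 Hh _)).
Qed.

Lemma hnormZ c w : n (c *: w) = cmod c * n w.
Proof.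
apply/eqP; rewrite -(@eqrXn2 _ 2) ?mulr_ge0 ?cmod_ge0 ?hnorm_ge0 //.
rewrite exprMn !hnorm_sqr_orth mulr_sumr; apply/eqP/eq_bigr => k _.
by rewrite coordZ cmodM; ring.
Qed.

Lemma hnorm_le_coord_sum w : n w <= \sum_k cmod (coord v w k) * n (v k).
Proof.
have F_ge0 k : 0 <= cmod (coord v w k) * n (v k) by rewrite mulr_ge0 ?cmod_ge0 ?hnorm_ge0.
rewrite -ler_sqr ?nnegrE ?hnorm_ge0 ?sumr_ge0 // hnorm_sqr_orth expr2 mulr_sumr.
apply: ler_sum => k _; rewrite -exprMn expr2 ler_wpM2r //.
by rewrite (bigD1 k) //= lerDl sumr_ge0.
Qed.

Lemma coord_le_hnorm w k : cmod (coord v w k) * n (v k) <= n w.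
Proof.
rewrite -ler_sqr ?nnegrE ?mulr_ge0 ?cmod_ge0 ?hnorm_ge0 // hnorm_sqr_orth exprMn.
by rewrite (bigD1 k) //= lerDl sumr_ge0 // => l _; rewrite mulr_ge0 ?sqr_ge0.
Qed.

End HermitianNorm.

Lemma homogeneous0 (R : realType) (N : nat) (n : 'rV[R[i]]_N -> R) :
  (forall (c : R[i]) w, n (c *: w) = cmod c * n w) -> n 0 = 0.
Proof. by move=> nZ; rewrite -(scale0r 0) nZ cmod0 mul0r. Qed.

Section Norm.
Variables (R : realType) (N : nat) (n : 'rV[R[i]]_N -> R).
Hypothesis Hn : is_norm n.

Lemma normZ c x : n (c *: x) = cmod c * n x.
Proof. by case: Hn. Qed.

Lemma normD x y : n (x + y) <= n x + n y.
Proof. by case: Hn. Qed.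

Lemma norm0 : n 0 = 0.
Proof. exact: homogeneous0 normZ. Qed.

Lemma norm_gt0 x : x != 0 -> 0 < n x.
Proof. by case: Hn => npos _ _; exact: npos. Qed.

Lemma norm_ge0 x : 0 <= n x.
Proof. by have [->|/norm_gt0/ltW //] := eqVneq x 0; rewrite norm0. Qed.

Lemma normN x : n (- x) = n x.
Proof. by rewrite -scaleN1r normZ cmodN1 mul1r. Qed.

Lemma norm_dist x y : `|n x - n y| <= n (x - y).
Proof.
have := normD (x - y) y; have := normD (y - x) x.
by rewrite !subrK -opprB normN ler_distl => ? ?; apply/andP; split; lra.
Qed.

Lemma norm_sum (I : Type) (r : seq I) (F : I -> 'rV[R[i]]_N) :
  n (\sum_(k <- r) F k) <= \sum_(k <- r) n (F k).
Proof.
elim: r => [|x r IH]; first by rewrite !big_nil norm0.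
by rewrite !big_cons; apply: le_trans (normD _ _) _; rewrite lerD2l.
Qed.

Lemma norm_comb_le (v : 'I_N -> 'rV[R[i]]_N) (c : 'I_N -> R[i]) :
  n (\sum_k c k *: v k) <= \sum_k cmod (c k) * n (v k).
Proof. by apply: le_trans (norm_sum _ _) _; under eq_bigr do rewrite normZ. Qed.

End Norm.

Lemma lipschitz_continuous (R : realType) n (f : 'rV[R]_n -> R) L : 0 <= L ->
  (forall x y, `|f x - f y| <= L * `|x - y|) -> continuous f.
Proof.
move=> L0 f_lip x; have x_filter : ProperFilter (nbhs x) by exact: nbhs_pfilter.
apply/cvgrPdist_lt => e e0.
have eL : 0 < e / (L + 1) by rewrite divr_gt0 // ltr_wpDl.
near=> y; apply: le_lt_trans (f_lip x y) _.
have : `|x - y| < e / (L + 1).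
  by near: y; apply: (@cvgr_dist_lt _ _ _ (nbhs x) _ id) => //; exact: cvg_id.
rewrite ltr_pdivlMr ?ltr_wpDl // => xy; nra.
Unshelve. all: by end_near.
Qed.

Lemma row_entry_le_norm (R : realType) n (z : 'rV[R]_n) j : `|z 0 j| <= `|z|.
Proof.
rewrite [leRHS]/Num.norm /= mx_normrE.
exact: (le_bigmax _ (fun ij : 'I_1 * 'I_n => `|z ij.1 ij.2|) (0, j)).
Qed.

Section NormEquivalence.
Variables (R : realType) (N : nat) (v : 'I_N -> 'rV[R[i]]_N).
Hypothesis Hv : is_basis v.

(* A real vector of dimension [2N] read as the real and imaginary parts of
   [N] complex coordinates: its unit sphere is compact. *)
Definition ccoord (z : 'rV[R]_(N + N)) (k : 'I_N) : R[i] :=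
  z 0 (lshift N k) +i* z 0 (rshift N k).

Definition vec_of (z : 'rV[R]_(N + N)) := \sum_k ccoord z k *: v k.

Lemma cmod_ccoord_le z k : cmod (ccoord z k) <= 2 * `|z|.
Proof.
apply: le_trans (cmod_le_ReIm _ _) _; rewrite mulr2n mulrDl mul1r.
by apply: lerD; apply: row_entry_le_norm.
Qed.

Lemma vec_ofB z z' : vec_of z - vec_of z' = vec_of (z - z').
Proof.
rewrite /vec_of -sumrB; apply: eq_bigr => k _; rewrite -scalerBl.
by congr (_ *: _); rewrite /ccoord !mxE.
Qed.

Lemma vec_ofZ (r : R) z : vec_of (r *: z) = r%:C *: vec_of z.
Proof.
rewrite /vec_of scaler_sumr; apply: eq_bigr => k _; rewrite scalerA.
by congr (_ *: _); rewrite /ccoord !mxE /=; congr (_ +i* _); ring.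
Qed.

Lemma coord_vec_of z k : coord v (vec_of z) k = ccoord z k.
Proof. exact: coord_comb. Qed.

Lemma vec_of_eq0 z : vec_of z = 0 -> z = 0.
Proof.
move=> z0; apply/rowP => j; rewrite mxE -(splitK j).
have ccoord0 k : ccoord z k = 0 by rewrite -coord_vec_of z0 coord0.
by case: (fintype.split j) => k /=; case: (ccoord0 k).
Qed.

Lemma vec_of_onto w : exists z, vec_of z = w.
Proof.
exists (\row_j match fintype.split j with
               | inl k => complex.Re (coord v w k)
               | inr k => complex.Im (coord v w k) end).
rewrite -[RHS](coord_decomp Hv); apply: eq_bigr => k _; congr (_ *: _).
by rewrite /ccoord !mxE (unsplitK (inl k)) (unsplitK (inr k)); case: (coord v w k).
Qed.

Lemma coord_sum_vec_of_le (n : 'rV[R[i]]_N -> R) z : (forall k, 0 <= n (v k)) ->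
  \sum_k cmod (coord v (vec_of z) k) * n (v k) <= 2 * (\sum_k n (v k)) * `|z|.
Proof.
move=> n_ge0; rewrite mulr_sumr mulr_suml; apply: ler_sum => k _.
by rewrite coord_vec_of mulrAC ler_wpM2r ?cmod_ccoord_le.
Qed.

Variable n' : 'rV[R[i]]_N -> R.
Hypothesis Hn' : is_norm n'.

Lemma norm_vec_of_continuous : continuous (fun z => n' (vec_of z)).
Proof.
apply: (@lipschitz_continuous _ _ _ (2 * (\sum_k n' (v k)))).
  by rewrite mulr_ge0 ?sumr_ge0 // => k _; exact: norm_ge0.
move=> z z'; apply: le_trans (norm_dist Hn' _ _) _; rewrite vec_ofB.
rewrite -[vec_of _](coord_decomp Hv); apply: le_trans (norm_comb_le Hn' _ _) _.
by apply: coord_sum_vec_of_le => k; exact: norm_ge0.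
Qed.

Lemma norm_vec_of_ge : exists2 m, 0 < m & forall z, m * `|z| <= n' (vec_of z).
Proof.
pose S := [set z : 'rV[R]_(N + N) | `|z| = 1]%classic.
have S_compact : compact S.
  apply: bounded_closed_compact.
    by exists 1; split; [rewrite num_real | move=> M M1 z /= ->; exact: ltW].
  have -> : S = ((fun z => `|z|) @^-1` [set x | x = 1])%classic by [].
  apply: preimage_closed; last exact: closed_eq.
  by move=> z _; exact: norm_continuous.
have [[z_ Sz_]|S0] := pselect (S !=set0)%classic; last first.
  exists 1 => // z; rewrite mul1r; have [->|z0] := eqVneq z 0.
    by rewrite normr0 norm_ge0.
  exfalso; apply: S0; exists (`|z|^-1 *: z).
  by rewrite /S /= normrZ normfV normr_id mulVf // normr_eq0.
have [c Sc c_min] := EVT_min_rV (ex_intro _ z_ Sz_) S_compact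
  (continuous_subspaceT norm_vec_of_continuous).
exists (n' (vec_of c)).
  apply: norm_gt0 => //; apply: contraPneq Sc => /vec_of_eq0 ->.
  by rewrite inE /S /= normr0 => /esym/eqP; rewrite oner_eq0.
move=> z; have [->|z0] := eqVneq z 0; first by rewrite normr0 mulr0 norm_ge0.
have zpos : 0 < `|z| by rewrite normr_gt0.
have Sz : (`|z|^-1 *: z) \in S.
  by rewrite inE /S /= normrZ normfV normr_id mulVf // gt_eqF.
have := c_min _ Sz; rewrite vec_ofZ (normZ Hn') cmod_real ger0_norm ?invr_ge0 ?(ltW zpos) //.
by rewrite mulrC ler_pdivlMr.
Qed.

Lemma coord_dominated_le_norm (n : 'rV[R[i]]_N -> R) :
  (forall k, 0 <= n (v k)) ->
  (forall w, n w <= \sum_k cmod (coord v w k) * n (v k)) ->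
  exists2 m, 0 < m & forall w, m * n w <= n' w.
Proof.
move=> nv_ge0 n_le; have [m0 m0_gt0 m0_le] := norm_vec_of_ge.
set B := 2 * (\sum_k n (v k)).
have B1_gt0 : 0 < B + 1 by rewrite ltr_wpDl // mulr_ge0 ?sumr_ge0.
exists (m0 / (B + 1)); first by rewrite divr_gt0.
move=> w; have [z <-] := vec_of_onto w; apply: le_trans (m0_le z).
have nz : n (vec_of z) <= (B + 1) * `|z|.
  apply: le_trans (n_le _) _; apply: le_trans (coord_sum_vec_of_le _ nv_ge0) _.
  by rewrite ler_wpM2r // lerDl.
apply: le_trans (ler_wpM2l _ nz) _; first by rewrite divr_ge0 ?ltW.
by rewrite mulrA divfK ?gt_eqF.
Qed.

End NormEquivalence.

Section NormRatio.
Variables (R : realType) (N : nat) (v : 'I_N -> 'rV[R[i]]_N).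
Hypothesis Hv : is_basis v.
Variables (n n' : 'rV[R[i]]_N -> R).
Hypotheses (Hn : hermitian_orth v n) (Hn' : is_norm n').

Lemma norm_le_hnorm : exists M, forall w, n' w <= M * n w.
Proof.
exists (\sum_k n' (v k) / n (v k)) => w; rewrite mulr_suml.
rewrite -{1}(coord_decomp Hv w); apply: le_trans (norm_comb_le Hn' _ _) _.
apply: ler_sum => k _; have nvk := hnorm_gt0 Hn (basis_neq0 Hv k).
rewrite mulrAC ler_pdivlMr // mulrAC [n' _ * _]mulrC ler_wpM2r ?(norm_ge0 Hn') //.
exact: coord_le_hnorm.
Qed.

Lemma ln_norm_ratio_bounded :
  exists m M, forall w, w != 0 -> m <= ln (n' w / n w) <= M.
Proof.
have [m m_gt0 m_le] := coord_dominated_le_norm Hv Hn' (fun k => hnorm_ge0 Hn (v k))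
  (hnorm_le_coord_sum Hv Hn).
have [M le_M] := norm_le_hnorm.
exists (ln m), (ln M) => w w0.
have nw := hnorm_gt0 Hn w0; have n'w := norm_gt0 Hn' w0.
have ratio_le : n' w / n w <= M by rewrite ler_pdivrMr.
have ratio_gt0 : 0 < n' w / n w by rewrite divr_gt0.
have M_gt0 : 0 < M := lt_le_trans ratio_gt0 ratio_le.
by rewrite !ler_ln ?posrE // ratio_le ler_pdivlMr ?m_le.
Qed.

End NormRatio.

Local Open Scope classical_set_scope.

Section SuccessiveMinima.
Variables (R : realType) (N : nat) (n1 n2 : 'rV[R[i]]_N -> R) (m M : R).
Hypothesis ratio_bounded : forall w, w != 0 -> m <= ln (n2 w / n1 w) <= M.

Definition ratios_in (W : 'M[R[i]]_N) := [set y | exists w : 'rV[R[i]]_N,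
  [/\ (w <= W)%MS, w != 0 & y = ln (n2 w / n1 w)]].

Definition minima_of_rank (i : 'I_N) := [set x | exists W : 'M[R[i]]_N,
  \rank W = i.+1 /\ x = inf (ratios_in W)].

Lemma succ_minE i : succ_min n1 n2 i = sup (minima_of_rank i).
Proof. by []. Qed.

Lemma ratios_in_lbound W : has_lbound (ratios_in W).
Proof. by exists m => y [w [_ w0 ->]]; case/andP: (ratio_bounded w0). Qed.

Lemma inf_ratios_in_bounds W : W != 0 -> m <= inf (ratios_in W) <= M.
Proof.
move=> W0; have [k rowk0] : exists k, row k W != 0.
  case: (pickP (fun k => row k W != 0)) => [k ?|all0]; first by exists k.
  by case/eqP: W0; apply/row_matrixP => k; rewrite row0; move/negbFE/eqP: (all0 k).
have Sk : ratios_in W (ln (n2 (row k W) / n1 (row k W))).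
  by exists (row k W); split => //; exact: row_sub.
apply/andP; split.
  apply: lb_le_inf; first exact: (ex_intro _ _ Sk).
  by move=> y [w [_ w0 ->]]; case/andP: (ratio_bounded w0).
by apply: le_trans (ge_inf (ratios_in_lbound W) Sk) _; case/andP: (ratio_bounded rowk0).
Qed.

Lemma minima_of_rank_bounds i x : minima_of_rank i x -> m <= x <= M.
Proof.
case=> W [rW ->]; apply: inf_ratios_in_bounds.
by apply: contra_eq_neq rW => ->; rewrite mxrank0.
Qed.

Lemma minima_of_rank_neq0 i : minima_of_rank i !=set0.
Proof. by exists (inf (ratios_in (pid_mx i.+1))), (pid_mx i.+1); rewrite rank_pid_mx. Qed.

Lemma succ_min_bounds i : m <= succ_min n1 n2 i <= M.
Proof.
have ubM : ubound (minima_of_rank i) M by move=> x /minima_of_rank_bounds/andP[].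
have [x Ox] := minima_of_rank_neq0 i.
rewrite succ_minE; apply/andP; split; last exact: ge_sup (minima_of_rank_neq0 i) ubM.
apply: le_trans (ub_le_sup (ex_intro _ M ubM) Ox).
by case/andP: (minima_of_rank_bounds Ox).
Qed.

Lemma succ_min_last_le (i : 'I_N) w : i.+1 = N -> w != 0 ->
  succ_min n1 n2 i <= ln (n2 w / n1 w).
Proof.
move=> iN w0; rewrite succ_minE ge_sup //; first exact: minima_of_rank_neq0.
move=> x [W [rW ->]]; apply: ge_inf; first exact: ratios_in_lbound.
by exists w; split => //; apply: submx_full; rewrite /row_full rW iN.
Qed.

Hypotheses (n1Z : forall (c : R[i]) w, n1 (c *: w) = cmod c * n1 w)
           (n2Z : forall (c : R[i]) w, n2 (c *: w) = cmod c * n2 w).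

Lemma ratios_in_line w : w != 0 -> ratios_in <<w>>%MS = [set ln (n2 w / n1 w)].
Proof.
move=> w0; apply/seteqP; split => [y [u [+ u0 ->]] | _ ->]; last first.
  by exists w; rewrite genmxE.
rewrite genmxE => /sub_rVP[c uE] /=.
have c0 : cmod c != 0.
  by rewrite cmod_eq0; apply: contra_neq u0 => c0; rewrite uE c0 scale0r.
by rewrite uE n1Z n2Z invfM mulrACA (mulfV c0) mul1r.
Qed.

Lemma succ_min_first_ge (i : 'I_N) w : i = 0 :> nat -> w != 0 ->
  ln (n2 w / n1 w) <= succ_min n1 n2 i.
Proof.
move=> i0 w0; rewrite succ_minE -[leLHS]inf1 -ratios_in_line //.
apply: ub_le_sup.
  by exists M => x /minima_of_rank_bounds/andP[].
by exists <<w>>%MS; rewrite genmxE rank_rV w0 i0.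
Qed.

End SuccessiveMinima.

Lemma ln_ratio_le (R : realType) (x y c : R) : 0 < x -> 0 < y ->
  (ln (x / y) <= c) = (x <= expR c * y).
Proof.
move=> x0 y0; rewrite -ler_expR lnK ?posrE ?divr_gt0 //.
by rewrite ler_pdivrMr.
Qed.

Lemma ln_ratio_ge (R : realType) (x y c : R) : 0 < x -> 0 < y ->
  (- c <= ln (x / y)) = (y <= expR c * x).
Proof.
move=> x0 y0; rewrite -invf_div lnV ?posrE ?divr_gt0 // lerNl opprK.
exact: ln_ratio_le.
Qed.

Section DistP.
Variables (R : realType) (N : nat) (n1 n2 : 'rV[R[i]]_N -> R).

Lemma succ_min_le_dist_infty i : `|succ_min n1 n2 i| <= dist_p +oo%E n1 n2.
Proof. exact: (le_bigmax _ (fun i => `|succ_min n1 n2 i|) i). Qed.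

Lemma dist_p_le (p : \bar R) B : (0 < N)%N -> (1 <= p)%E ->
  (forall i, `|succ_min n1 n2 i| <= B) -> dist_p p n1 n2 <= B.
Proof.
move=> N0 p1 le_B; have B0 : 0 <= B := le_trans (normr_ge0 _) (le_B (Ordinal N0)).
case: p p1 => [r||] //= r1; last by apply: bigmax_le.
rewrite lee_fin in r1; have r0 : 0 < r := lt_le_trans ltr01 r1.
apply: (@le_trans _ _ ((powR B r) `^ r^-1)); last first.
  by rewrite -powRrM mulfV ?gt_eqF // powRr1.
apply: ge0_ler_powR; rewrite ?invr_ge0 ?(ltW r0) ?nnegrE ?powR_ge0 //.
  by rewrite mulr_ge0 ?invr_ge0 // sumr_ge0 // => i _; exact: powR_ge0.
rewrite ler_pdivrMl ?ltr0n // mulr_natl.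
rewrite -[X in _ *+ X]card_ord -sumr_const; apply: ler_sum => i _.
by apply: ge0_ler_powR; rewrite ?nnegrE ?(ltW r0).
Qed.

End DistP.

Section DistInfty.
Variables (R : realType) (N : nat) (n1 n2 : 'rV[R[i]]_N -> R) (m M : R).
Hypothesis N_gt0 : (0 < N)%N.
Hypothesis ratio_bounded : forall w, w != 0 -> m <= ln (n2 w / n1 w) <= M.
Hypotheses (n1_gt0 : forall w, w != 0 -> 0 < n1 w)
           (n2_gt0 : forall w, w != 0 -> 0 < n2 w).
Hypotheses (n1Z : forall (c : R[i]) w, n1 (c *: w) = cmod c * n1 w)
           (n2Z : forall (c : R[i]) w, n2 (c *: w) = cmod c * n2 w).

Local Notation D := (dist_p +oo%E n1 n2).

Lemma dist_infty_boundr w : n2 w <= expR D * n1 w.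
Proof.
have [->|w0] := eqVneq w 0; first by rewrite !homogeneous0 ?mulr0.
rewrite -ln_ratio_le ?n1_gt0 ?n2_gt0 //.
apply: le_trans (succ_min_first_ge ratio_bounded n1Z n2Z (i := Ordinal N_gt0) _ w0) _ => //.
exact: le_trans (ler_norm _) (succ_min_le_dist_infty _ _ _).
Qed.

Lemma dist_infty_boundl w : n1 w <= expR D * n2 w.
Proof.
have [->|w0] := eqVneq w 0; first by rewrite !homogeneous0 ?mulr0.
have iN : (N.-1 < N)%N by rewrite prednK.
rewrite -ln_ratio_ge ?n1_gt0 ?n2_gt0 //.
apply: le_trans (succ_min_last_le ratio_bounded (i := Ordinal iN) _ w0); last first.
  by rewrite /= prednK.
rewrite lerNl; apply: le_trans (succ_min_le_dist_infty _ _ (Ordinal iN)).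
by rewrite -normrN ler_norm.
Qed.

End DistInfty.

Section NonArchimedean.
Variables (R : realType) (N : nat) (v : 'I_N -> 'rV[R[i]]_N) (a : 'I_N -> R).
Hypothesis Hv : is_basis v.

Lemma na_norm_ge0 u : 0 <= na_norm v a u.
Proof. by apply: bigmax_ge_id. Qed.

Lemma na_norm_scale_basis_le c k : na_norm v a (c *: v k) <= expR (- a k).
Proof.
apply: bigmax_le => [|j]; first exact: expR_ge0.
by rewrite coord_scale_basis //; case: (eqVneq j k) => [->|_]; rewrite ?eqxx.
Qed.

Lemma expR_le_na_norm u k : coord v u k != 0 -> expR (- a k) <= na_norm v a u.
Proof. by move=> uk; rewrite /na_norm; apply: le_bigmax_cond. Qed.

End NonArchimedean.

Section Iota.
Variables (R : realType) (N : nat) (v : 'I_N -> 'rV[R[i]]_N) (a : 'I_N -> R).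
Hypothesis Hv : is_basis v.
Variables (nrm nrm' n1 : 'rV[R[i]]_N -> R).
Hypotheses (Hnrm : hermitian_orth v nrm) (Hnrm' : is_norm nrm').
Hypothesis Hn1 : is_iota v nrm a n1.
Variable D : R.
Hypotheses (nrm'_le : forall w, nrm' w <= expR D * nrm w)
           (nrm_le : forall w, nrm w <= expR D * nrm' w).

Lemma iota_hermitian : hermitian_orth v n1.
Proof. by case: Hn1. Qed.

Lemma iota_basis k : n1 (v k) = nrm (v k) * expR (- a k).
Proof. by case: Hn1. Qed.

Lemma iota1_term_le c k :
  nrm' (c *: v k) * na_norm v a (c *: v k) <= expR D * (cmod c * n1 (v k)).
Proof.
rewrite iota_basis (normZ Hnrm') mulrCA !mulrA.
apply: ler_pM; rewrite ?mulr_ge0 ?cmod_ge0 ?(norm_ge0 Hnrm') ?na_norm_ge0 //.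
  by rewrite -mulrA ler_wpM2l ?cmod_ge0.
exact: na_norm_scale_basis_le.
Qed.

Lemma coord_iota_le_na u k :
  cmod (coord v u k) * n1 (v k) <= nrm u * na_norm v a u.
Proof.
have [->|uk0] := eqVneq (coord v u k) 0.
  by rewrite cmod0 mul0r mulr_ge0 ?na_norm_ge0 ?(hnorm_ge0 Hnrm).
rewrite iota_basis mulrA; apply: ler_pM; rewrite ?mulr_ge0 ?cmod_ge0 ?(hnorm_ge0 Hnrm) //.
  exact: coord_le_hnorm.
exact: expR_le_na_norm.
Qed.

Lemma iota1_le w : iota1 v nrm' a w <= N%:R * expR D * n1 w.
Proof.
pose ws := [seq coord v w k *: v k | k <- index_enum 'I_N].
apply: (@le_trans _ _ (\sum_(u <- ws) nrm' u * na_norm v a u)).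
  apply: ge_inf; last by exists ws; rewrite big_map coord_decomp.
  exists 0 => _ [us [_ ->]]; apply: sumr_ge0 => u _.
  by rewrite mulr_ge0 ?na_norm_ge0 ?(norm_ge0 Hnrm').
rewrite big_map -mulrA mulr_natl -[X in _ *+ X]card_ord -sumr_const.
apply: ler_sum => k _; apply: le_trans (iota1_term_le _ _) _.
by rewrite ler_wpM2l ?expR_ge0 // (coord_le_hnorm Hv iota_hermitian).
Qed.

Lemma iota1_ge w : (0 < N)%N -> n1 w <= N%:R * expR D * iota1 v nrm' a w.
Proof.
move=> N_gt0; have ND_gt0 : 0 < N%:R * expR D by rewrite mulr_gt0 ?expR_gt0 ?ltr0n.
rewrite -ler_pdivrMl //; apply: lb_le_inf.
  by exists (nrm' w * na_norm v a w), [:: w]; rewrite !big_seq1.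
move=> _ [ws [<- ->]]; rewrite ler_pdivrMl //.
apply: le_trans (hnorm_le_coord_sum Hv iota_hermitian _) _.
rewrite -mulrA mulr_natl -[X in _ *+ X]card_ord -sumr_const; apply: ler_sum => k _.
rewrite coord_sum; apply: le_trans (ler_wpM2r (hnorm_ge0 iota_hermitian _) (cmod_sum _ _)) _.
rewrite mulr_suml mulr_sumr; apply: ler_sum => u _.
apply: le_trans (coord_iota_le_na u k) _.
by rewrite mulrA ler_wpM2r ?na_norm_ge0.
Qed.

End Iota.

Theorem lemma3p1 (R : realType) (N : nat) (HN : (0 < N)%N)
  (v : 'I_N -> 'rV[R[i]]_N) (Hv : is_basis v) (a : 'I_N -> R)
  (nrm : 'rV[R[i]]_N -> R) (Hnrm : hermitian_orth v nrm)
  (nrm' : 'rV[R[i]]_N -> R) (Hnrm' : is_norm nrm')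
  (n1 : 'rV[R[i]]_N -> R) (Hn1 : is_iota v nrm a n1)
  (p : \bar R) (Hp : (1 <= p)%E) :
  dist_p p n1 (iota1 v nrm' a) <= dist_p +oo%E nrm nrm' + ln (N%:R : R).
Proof.
have [m [M ratio_bounded]] := ln_norm_ratio_bounded Hv Hnrm Hnrm'.
have dist_infty_bound := dist_infty_boundr HN ratio_bounded (hnorm_gt0 Hnrm)
  (norm_gt0 Hnrm') (hnormZ Hv Hnrm) (normZ Hnrm').
have dist_infty_bound' := dist_infty_boundl HN ratio_bounded (hnorm_gt0 Hnrm)
  (norm_gt0 Hnrm') (hnormZ Hv Hnrm) (normZ Hnrm').
set D := dist_p +oo%E nrm nrm' in dist_infty_bound dist_infty_bound' *.
have expB : expR (D + ln N%:R) = N%:R * expR D.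
  by rewrite expRD lnK ?posrE ?ltr0n // mulrC.
apply: dist_p_le => // i; rewrite ler_norml.
apply: (succ_min_bounds (m := - _)) => w w0.
have n1w := hnorm_gt0 (iota_hermitian Hn1) w0.
have := iota1_ge Hv Hnrm Hn1 dist_infty_bound' w HN; rewrite -expB => n1_le.
have iw : 0 < iota1 v nrm' a w by rewrite -(pmulr_rgt0 _ (expR_gt0 (D + ln N%:R))) (lt_le_trans n1w).
rewrite ln_ratio_ge // ln_ratio_le // n1_le expB /=.
exact: (iota1_le Hv Hnrm' Hn1 dist_infty_bound w).
Qed.
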